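(* Let $A\in\mathbb{R}^{n\times d}$, $b\in\mathbb{R}^n$, and suppose $Ax=b$ admits a solution $x^*$. Let $\lbrace W_1,\ldots,W_N\rbrace\subset\mathbb{R}^n$ and let $w$ be a random variable with $\mathbb{P}[w=W_j]>0$ for $j=1,\ldots,N$ and $\sum_j\mathbb{P}[w=W_j]=1$. Let $\lbrace w_\ell:\ell\geq0\rbrace$ be sampled from $\lbrace W_1,\ldots,W_N\rbrace$ without replacement, the set being repopulated with its original elements once exhausted and sampling without replacement repeated. Let $\mathcal{N}(w) = \mathrm{span}\lbrace z\in\mathbb{R}^d:\mathbb{P}[z'A'w=0]=1\rbrace$, $\mathcal{R}(w) = \mathcal{N}(w)^\perp$; let $x_0\in\mathbb{R}^d$ be arbitrary and $x_{k+1} = x_k + A'w_kw_k'(b-Ax_k)/\|A'w_k\|_2^2$. Define $\tau_0=0$, $\tau_1=\min\lbrace k\geq0:\mathrm{span}\lbrace A'w_0,\ldots,A'w_k\rbrace=\mathcal{R}(w)\rbrace$, and for $\ell\geq2$, $\tau_\ell=\min\lbrace k>\tau_{\ell-1}:\mathrm{span}\lbrace A'w_{\tau_{\ell-1}+1},\ldots,A'w_k\rbrace=\mathcal{R}(w)\rbrace$ if $\tau_{\ell-1}<\infty$, else $\infty$; let $\mathcal{F}_\ell$ be the set of matrices whose columns form a maximal linearly independent subset of $\lbrace A'w_{\tau_{\ell-1}+1}/\|A'w_{\tau_{\ell-1}+1}\|_2,\ldots,A'w_{\tau_\ell}/\|A'w_{\tau_\ell}\|_2\rbrace$ and $\gamma_\ell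 = 1-\min_{F\in\mathcal{F}_\ell}\det(F'F)$. Then (1) $\tau_\ell - \tau_{\ell-1}\leq 2N$ for all $\ell\in\mathbb{N}$, and (2) $\lim_{\ell\to\infty}\prod_{j=1}^\ell\gamma_j = 0$. Moreover, the $\gamma_j$ are uniformly bounded by some $\gamma\in[0,1)$ that depends on $\lbrace A'W_1,\ldots,A'W_N\rbrace$, and therefore, with probability one, $$\|x_{2N\ell} - x^* - P_{\mathcal{N}(w)}(x_0-x^* )\|_2^2 \leq \gamma^\ell\|P_{\mathcal{R}(w)}(x_0-x^* )\|_2^2.$$
   Context: $P_W$ is orthogonal projection onto $W$; $A'$ is the transpose. The iteration presupposes $A'w_k\neq0$. *)

From HB Require Import structures.
From mathcomp Require Import all_boot all_order all_algebra.
From mathcomp Require Import all_classical all_reals all_analysis.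
Set Implicit Arguments. Unset Strict Implicit. Unset Printing Implicit Defensive.
Import Order.TTheory GRing.Theory Num.Theory.
Local Open Scope ring_scope.
Local Open Scope classical_set_scope.

Definition sqnorm (R : realType) (m : nat) (v : 'cV[R]_m) : R :=
  \sum_(i < m) v i 0 ^+ 2.
Definition norm2 (R : realType) (m : nat) (v : 'cV[R]_m) : R :=
  Num.sqrt (sqnorm v).

Definition spanset (R : realType) (d : nat) (S : set 'cV[R]_d) : set 'cV[R]_d :=
  [set x | forall M : 'M[R]_d, (forall z, S z -> (z^T <= M)%MS) -> (x^T <= M)%MS].

Definition orthcompl (R : realType) (d : nat) (S : set 'cV[R]_d) : set 'cV[R]_d :=
  [set y | forall z, S z -> y^T *m z = 0].

Definition is_orth_proj (R : realType) (d : nat) (S : set 'cV[R]_d)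
  (v u : 'cV[R]_d) : Prop :=
  S u /\ forall z, S z -> (v - u)^T *m z = 0.

(* The random variable w takes value W j with probability p j.
   P[z'A'w = 0] : *)
Definition prob_zero (R : realType) (n d N : nat) (A : 'M[R]_(n, d))
  (W : 'I_N -> 'cV[R]_n) (p : 'I_N -> R) (z : 'cV[R]_d) : R :=
  \sum_(j < N | z^T *m A^T *m W j == 0) p j.

Definition Nw (R : realType) (n d N : nat) (A : 'M[R]_(n, d))
  (W : 'I_N -> 'cV[R]_n) (p : 'I_N -> R) : set 'cV[R]_d :=
  spanset [set z | prob_zero A W p z = 1].
Definition Rw (R : realType) (n d N : nat) (A : 'M[R]_(n, d))
  (W : 'I_N -> 'cV[R]_n) (p : 'I_N -> R) : set 'cV[R]_d :=
  orthcompl (Nw A W p).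

(* The sample sequence is w_k = W (s k). *)
Definition spanOK (R : realType) (n d N : nat) (A : 'M[R]_(n, d))
  (W : 'I_N -> 'cV[R]_n) (p : 'I_N -> R) (s : nat -> 'I_N) (s0 k : nat) : Prop :=
  forall y : 'cV[R]_d,
    (y^T <= (\sum_(s0 <= i < k.+1) <<(A^T *m W (s i))^T>>)%MS)%MS <-> Rw A W p y.

Lemma ex_asbool (P : nat -> Prop) : (exists k, P k) -> exists k, `[< P k >].
Proof. by move=> [k hk]; exists k; apply/asboolP. Qed.

(* least k with P k, or None (= infinity) if there is none *)
Definition first_hit (P : nat -> Prop) : option nat :=
  match pselect (exists k, P k) with
  | left h => Some (ex_minn (ex_asbool h))
  | right _ => None
  end.

Fixpoint tau (R : realType) (n d N : nat) (A : 'M[R]_(n, d))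
  (W : 'I_N -> 'cV[R]_n) (p : 'I_N -> R) (s : nat -> 'I_N) (l : nat)
  : option nat :=
  match l with
  | 0 => Some 0%N
  | l'.+1 =>
    match l' with
    | 0 => first_hit (fun k => spanOK A W p s 0 k)
    | _ => obind (fun t => first_hit (fun k => (t < k)%N /\ spanOK A W p s t.+1 k))
                 (tau A W p s l')
    end
  end.

Definition blockvec (R : realType) (n d N : nat) (A : 'M[R]_(n, d))
  (W : 'I_N -> 'cV[R]_n) (s : nat -> 'I_N) (s0 t : nat) (y : 'cV[R]_d) : Prop :=
  exists i, (s0 <= i <= t)%N /\
    y = (norm2 (A^T *m W (s i)))^-1 *: (A^T *m W (s i)).

Definition maxindep (R : realType) (n d N : nat) (A : 'M[R]_(n, d))
  (W : 'I_N -> 'cV[R]_n) (s : nat -> 'I_N) (s0 t : nat) (r : nat)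
  (F : 'M[R]_(d, r)) : Prop :=
  [/\ forall j, blockvec A W s s0 t (col j F),
      \rank F = r &
      forall y, blockvec A W s s0 t y -> (\rank (row_mx F y) < r.+1)%N].

Definition detset (R : realType) (n d N : nat) (A : 'M[R]_(n, d))
  (W : 'I_N -> 'cV[R]_n) (s : nat -> 'I_N) (s0 t : nat) : set R :=
  [set x | exists r (F : 'M[R]_(d, r)), maxindep A W s s0 t F /\ x = \det (F^T *m F)].

(* gamma_l = 1 - min_{F in F_l} det(F'F); block l is indices
   tau_{l-1}+1 .. tau_l for l >= 2 and 0 .. tau_1 for l = 1.
   (Value 1 when some tau is infinite: never used, see (1).) *)
Definition gamma (R : realType) (n d N : nat) (A : 'M[R]_(n, d))
  (W : 'I_N -> 'cV[R]_n) (p : 'I_N -> R) (s : nat -> 'I_N) (l : nat) : R :=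
  match tau A W p s l.-1, tau A W p s l with
  | Some t, Some t' => 1 - inf (detset A W s (if l == 1%N then 0%N else t.+1) t')
  | _, _ => 1
  end.

Fixpoint kacz (R : realType) (n d N : nat) (A : 'M[R]_(n, d)) (b : 'cV[R]_n)
  (W : 'I_N -> 'cV[R]_n) (s : nat -> 'I_N) (x0 : 'cV[R]_d) (k : nat)
  : 'cV[R]_d :=
  match k with
  | 0 => x0
  | k'.+1 =>
    let x := kacz A b W s x0 k' in
    let a := A^T *m W (s k') in
    x + (((W (s k'))^T *m (b - A *m x)) 0 0 / sqnorm a) *: a
  end.

(* Write a_j = A'W_j and u_j = a_j / |a_j|.  The error e_k = x_k - x* - z, where z is the
   projection of x_0 - x* onto N(w), starts in R(w), the row space of the a_j, and each step
   replaces it by its orthogonal projection onto the hyperplane orthogonal to the current u_j.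
   Every block of N consecutive samples is a permutation of the W_j, so the window that
   starts right after tau_(l-1) and runs to the end of the next complete block spans R(w);
   this gives tau_l - tau_(l-1) <= 2N.
   Within one block, u_i . e_0 = u_i . (e_0 - e_(i+1)) and the drift |e_0 - e_i|^2 is at most
   i times the energy drop |e_0|^2 - |e_i|^2, so sum_j (u_j . e_0)^2 is at most N^2 times the
   energy drop of the block; on R(w) that sum is at least |e_0|^2 / K, where K is the squared
   Frobenius norm of a pseudo-inverse of the matrix with rows u_j.  Hence |e|^2 contracts by
   the factor 1 - 1/(K N^2 + 1) per block.
   Finally gamma_l <= 1 - c, where c > 0 is the least Gram determinant of a linearly
   independent family drawn from the finitely many u_j: such determinants lie in (0, 1] by
   Hadamard's inequality. *)

From HB Require Import structures.
From mathcomp Require Import all_boot all_order all_algebra.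
From mathcomp Require Import all_classical all_reals all_analysis.
From mathcomp Require Import ring lra zify.
Set Implicit Arguments. Unset Strict Implicit. Unset Printing Implicit Defensive.
Import Order.TTheory GRing.Theory Num.Theory.
Import numFieldNormedType.Exports.
Local Open Scope ring_scope.
Local Open Scope classical_set_scope.

(** * Inner products of column vectors *)

Section InnerProduct.
Variables (R : comPzRingType) (d : nat).
Implicit Types u v w : 'cV[R]_d.

Definition dot u v : R := (u^T *m v) 0 0.

Lemma dotE u v : dot u v = \sum_k u k 0 * v k 0.
Proof. by rewrite /dot mxE; apply: eq_bigr => k _; rewrite mxE. Qed.

Lemma dotC u v : dot u v = dot v u.
Proof. by rewrite !dotE; apply: eq_bigr => k _; rewrite mulrC. Qed.

Lemma dotDr u v w : dot u (v + w) = dot u v + dot u w.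
Proof. by rewrite /dot mulmxDr mxE. Qed.

Lemma dot0r u : dot u 0 = 0.
Proof. by rewrite /dot mulmx0 mxE. Qed.

Lemma dotNr u v : dot u (- v) = - dot u v.
Proof. by rewrite /dot mulmxN mxE. Qed.

Lemma dotBr u v w : dot u (v - w) = dot u v - dot u w.
Proof. by rewrite dotDr dotNr. Qed.

Lemma dotZr u v c : dot u (c *: v) = c * dot u v.
Proof. by rewrite /dot -scalemxAr mxE. Qed.

Lemma dot_sumr I (r : seq I) (P : pred I) (F : I -> 'cV[R]_d) u :
  dot u (\sum_(i <- r | P i) F i) = \sum_(i <- r | P i) dot u (F i).
Proof. by rewrite /dot mulmx_sumr summxE. Qed.

Lemma dotDl u v w : dot (v + w) u = dot v u + dot w u.
Proof. by rewrite dotC dotDr !(dotC u). Qed.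

Lemma dotBl u v w : dot (v - w) u = dot v u - dot w u.
Proof. by rewrite dotC dotBr !(dotC u). Qed.

Lemma dotZl u v c : dot (c *: v) u = c * dot v u.
Proof. by rewrite dotC dotZr dotC. Qed.

Lemma dot_suml I (r : seq I) (P : pred I) (F : I -> 'cV[R]_d) u :
  dot (\sum_(i <- r | P i) F i) u = \sum_(i <- r | P i) dot (F i) u.
Proof. by rewrite dotC dot_sumr; apply: eq_bigr => i _; rewrite dotC. Qed.

End InnerProduct.

Section RealInnerProduct.
Variables (R : realFieldType) (d : nat).
Implicit Types u v g : 'cV[R]_d.

Lemma dot_ge0 v : 0 <= dot v v.
Proof. by rewrite dotE; apply: sumr_ge0 => k _; rewrite -expr2 sqr_ge0. Qed.

Lemma dot_eq0 v : (dot v v == 0) = (v == 0).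
Proof.
apply/idP/idP => [|/eqP->]; last by rewrite dot0r.
rewrite dotE psumr_eq0 => [/allP v0|k _]; last by rewrite -expr2 sqr_ge0.
apply/eqP/matrixP => i j; rewrite ord1 mxE.
by have /(_ (mem_index_enum i)) := v0 i; rewrite -expr2 sqrf_eq0 => /eqP.
Qed.

Lemma dot_gt0 v : (0 < dot v v) = (v != 0).
Proof. by rewrite lt_def dot_eq0 dot_ge0 andbT. Qed.

Lemma sqr_dot_le u v : dot u v ^+ 2 <= dot u u * dot v v.
Proof.
have [->|v0] := eqVneq v 0; first by rewrite !dot0r expr0n mulr0.
have := dot_ge0 (dot v v *: u - dot u v *: v).
rewrite dotBl !dotBr !dotZl !dotZr (dotC v u).
have -> : forall uu uv vv : R,
    vv * (vv * uu) - vv * (uv * uv) - (uv * (vv * uv) - uv * (uv * vv))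
    = vv * (uu * vv - uv ^+ 2) by move=> *; ring.
by rewrite pmulr_rge0 ?dot_gt0 // subr_ge0.
Qed.

Lemma dot_sum_le m (v : 'I_m -> 'cV[R]_d) :
  dot (\sum_k v k) (\sum_k v k) <= m%:R * \sum_k dot (v k) (v k).
Proof.
have mean k l : 2 * dot (v k) (v l) <= dot (v k) (v k) + dot (v l) (v l).
  by have := dot_ge0 (v k - v l); rewrite dotBl !dotBr (dotC (v l)); lra.
rewrite -(ler_pM2l (ltr0n R 2)) dot_suml mulr_sumr.
under eq_bigr do rewrite dot_sumr mulr_sumr.
apply: le_trans (ler_sum _ (fun k _ => ler_sum _ (fun l _ => mean k l))) _.
under eq_bigr do rewrite big_split /= sumr_const card_ord.
rewrite big_split /= sumr_const card_ord.
by rewrite mulrA -natrM mulr_natl mulnC mulrnA mulr2n sumrMnl.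
Qed.

Definition hproj u g := g - dot u g *: u.

Lemma dot_hproj u g : dot u u = 1 -> dot u (hproj u g) = 0.
Proof. by move=> u1; rewrite dotBr dotZr u1 mulr1 subrr. Qed.

Lemma hproj_energy u g : dot u u = 1 ->
  dot (hproj u g) (hproj u g) = dot g g - dot u g ^+ 2.
Proof.
move=> u1; rewrite {1}/hproj dotBl dotZl dot_hproj // mulr0 subr0.
by rewrite /hproj dotBr dotZr (dotC g u) expr2.
Qed.

Lemma dot_sub_hproj u g : dot u u = 1 ->
  dot (g - hproj u g) (g - hproj u g) = dot u g ^+ 2.
Proof. by move=> u1; rewrite /hproj opprB addrC subrK dotZl dotZr u1 mulr1 expr2. Qed.

End RealInnerProduct.

Section Normalization.
Variables (R : realType) (d : nat).
Implicit Types v g : 'cV[R]_d.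

Lemma sqnormE v : sqnorm v = dot v v.
Proof. by rewrite dotE; apply: eq_bigr => k _; rewrite expr2. Qed.

Lemma sqr_norm2 v : norm2 v ^+ 2 = dot v v.
Proof. by rewrite sqr_sqrtr sqnormE ?dot_ge0. Qed.

Lemma norm2_gt0 v : v != 0 -> 0 < norm2 v.
Proof. by rewrite sqrtr_gt0 sqnormE dot_gt0. Qed.

Definition unitv v := (norm2 v)^-1 *: v.

Lemma dot_unitv v : v != 0 -> dot (unitv v) (unitv v) = 1.
Proof.
move=> v0; rewrite dotZl dotZr mulrA -expr2 exprVn sqr_norm2 mulVf //.
by rewrite dot_eq0.
Qed.

Lemma unitvK v : v != 0 -> norm2 v *: unitv v = v.
Proof. by move=> v0; rewrite scalerA mulfV ?scale1r // gt_eqF ?norm2_gt0. Qed.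

Lemma dot_unitvZ v g : dot (unitv v) g *: unitv v = (dot v g / sqnorm v) *: v.
Proof.
rewrite dotZl scalerA mulrAC -expr2 exprVn sqr_norm2 sqnormE.
by rewrite mulrC.
Qed.

End Normalization.

Lemma col_mulmx (R : pzSemiRingType) m n p (M : 'M[R]_(m, n)) (B : 'M[R]_(n, p)) k :
  col k (M *m B) = M *m col k B.
Proof. by apply/matrixP => i j; rewrite !mxE; apply: eq_bigr => l _; rewrite !mxE. Qed.

Lemma mx11_eq0 (R : nmodType) (M : 'M[R]_1) : (M == 0) = (M 0 0 == 0).
Proof.
apply/eqP/eqP => [->|M0]; first by rewrite mxE.
by apply/matrixP => i j; rewrite !ord1 M0 mxE.
Qed.

Section MatrixOfRows.
Variables (R : comPzRingType) (m d : nat) (v : 'I_m -> 'cV[R]_d).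

Lemma matrix_rows_mulE z j : ((\matrix_j (v j)^T) *m z) j 0 = dot (v j) z.
Proof. by rewrite dotE mxE; apply: eq_bigr => k _; rewrite !mxE. Qed.

Lemma matrix_rows_mul_eq0 z :
  (\matrix_j (v j)^T) *m z = 0 <-> forall j, dot (v j) z = 0.
Proof.
split => [Mz0 j|orth]; first by rewrite -matrix_rows_mulE Mz0 mxE.
by apply/matrixP => j i; rewrite ord1 matrix_rows_mulE orth mxE.
Qed.

Lemma dot_matrix_rows_mul z :
  dot ((\matrix_j (v j)^T) *m z) ((\matrix_j (v j)^T) *m z) = \sum_j dot (v j) z ^+ 2.
Proof. by rewrite dotE; apply: eq_bigr => j _; rewrite matrix_rows_mulE expr2. Qed.

End MatrixOfRows.

Lemma orth_proj_compl (R : realType) d (S : set 'cV[R]_d) v u1 u2 :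
  is_orth_proj S v u1 -> is_orth_proj (orthcompl S) v u2 -> v - u1 = u2.
Proof.
move=> [u1_S v_u1] [u2_S v_u2]; apply/eqP; rewrite -subr_eq0 -dot_eq0.
set w := v - u1 - u2.
have w_S : orthcompl S w.
  by move=> z zS; rewrite linearB mulmxBl /= v_u1 // u2_S // subrr.
have h1 : dot (v - u2) w = 0 by rewrite /dot v_u2 // mxE.
have h2 : dot u1 w = 0 by rewrite dotC /dot w_S // mxE.
rewrite {1}(_ : w = (v - u2) - u1); last by rewrite /w addrAC.
by rewrite dotBl h1 h2 subrr.
Qed.

(** * Sweeps of hyperplane projections *)

Section ProjectionSweep.
Variables (R : realFieldType) (d : nat) (u g : nat -> 'cV[R]_d).
Hypothesis u_unit : forall i, dot (u i) (u i) = 1.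
Hypothesis g_step : forall i, g i.+1 = hproj (u i) (g i).
Local Notation energy i := (dot (g i) (g i)).

Lemma sweep_energyS i : energy i.+1 = energy i - dot (u i) (g i) ^+ 2.
Proof. by rewrite g_step hproj_energy. Qed.

Lemma sweep_energy_nonincr i j : (i <= j)%N -> energy j <= energy i.
Proof.
move=> /subnK <-; elim: (j - i)%N => [|k IH]; first by rewrite add0n.
by rewrite addSn sweep_energyS (le_trans _ IH) // lerBlDr lerDl sqr_ge0.
Qed.

Lemma sweep_drift i :
  dot (g 0%N - g i) (g 0%N - g i) <= i%:R * (energy 0%N - energy i).
Proof.
have tele (V : zmodType) (f : nat -> V) : \sum_(k < i) (f k - f k.+1) = f 0%N - f i.
  rewrite -opprB -(telescope_sumr _ (leq0n i)) -sumrN big_mkord.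
  by apply: eq_bigr => k _; rewrite opprB.
have termE k : dot (g k - g k.+1) (g k - g k.+1) = energy k - energy k.+1.
  by rewrite sweep_energyS g_step dot_sub_hproj // opprB addrC subrK.
rewrite -tele -(tele _ (fun k => energy k)); apply: le_trans (dot_sum_le _) _.
by under eq_bigr do rewrite termE.
Qed.

Lemma sweep_bound m :
  \sum_(i < m) dot (u i) (g 0%N) ^+ 2 <= (m * m)%:R * (energy 0%N - energy m).
Proof.
have step (i : 'I_m) : dot (u i) (g 0%N) ^+ 2 <= m%:R * (energy 0%N - energy m).
  have -> : dot (u i) (g 0%N) = dot (u i) (g 0%N - g i.+1).
    by rewrite dotBr g_step dot_hproj // subr0.
  apply: le_trans (sqr_dot_le _ _) _; rewrite u_unit mul1r.
  apply: le_trans (sweep_drift i.+1) _; apply: ler_pM.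
  - exact: ler0n.
  - by rewrite subr_ge0 sweep_energy_nonincr.
  - by rewrite ler_nat ltn_ord.
  - by rewrite lerB // sweep_energy_nonincr.
apply: le_trans (ler_sum _ (fun i _ => step i)) _.
by rewrite sumr_const card_ord -mulrnAl -mulrnA.
Qed.

End ProjectionSweep.

Section FrameInequality.
Variables (R : realFieldType) (m d : nat) (B : 'M[R]_(m, d)).

Definition frame_const : R := \sum_j dot (col j (pinvmx B)) (col j (pinvmx B)).

Lemma frame_const_ge0 : 0 <= frame_const.
Proof. by apply: sumr_ge0 => j _; exact: dot_ge0. Qed.

Lemma frame_ineq y :
  (y^T <= B)%MS -> dot y y <= frame_const * dot (B *m y) (B *m y).
Proof.
(* y^T = c^T B for c := (y^T P)^T, P a pseudo-inverse; then use Cauchy-Schwarz twice. *)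
move=> yB; set c := (y^T *m pinvmx B)^T.
have yyE : dot y y = dot c (B *m y) by rewrite /dot trmxK mulmxA mulmxKpV.
have cc : dot c c <= dot y y * frame_const.
  have cE j : c j 0 = dot y (col j (pinvmx B)).
    by rewrite /dot !mxE; apply: eq_bigr => k _; rewrite !mxE.
  rewrite dotE /frame_const mulr_sumr; apply: ler_sum => j _.
  by rewrite cE -expr2 sqr_dot_le.
have [y0|yn0] := eqVneq (dot y y) 0.
  by rewrite y0 mulr_ge0 ?frame_const_ge0 ?dot_ge0.
have ypos : 0 < dot y y by rewrite lt_def yn0 dot_ge0.
rewrite -(ler_pM2l ypos) -expr2 {1}yyE mulrA.
apply: le_trans (sqr_dot_le _ _) _; apply: ler_wpM2r cc; exact: dot_ge0.
Qed.

End FrameInequality.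

Lemma le_contraction (R : realFieldType) (L a b : R) :
  0 < L -> a <= L * (a - b) -> b <= (1 - L^-1) * a.
Proof.
move=> L_gt0 gain; rewrite mulrBl mul1r lerBrDl -(ler_pM2l L_gt0) mulrDr mulrA.
by rewrite mulfV ?gt_eqF // mul1r; move: gain; rewrite mulrBr; lra.
Qed.

Lemma cvg_prod_le_lt1 (R : realType) (gam : R) (f : nat -> R) :
  0 <= gam < 1 -> (forall j, (1 <= j)%N -> 0 <= f j <= gam) ->
  (fun l => \prod_(1 <= j < l.+1) f j) @ \oo --> (0 : R).
Proof.
move=> /andP [gam_ge0 gam_lt1] f_bd.
have prod_bd l : 0 <= \prod_(1 <= j < l.+1) f j <= gam ^+ l.
  elim: l => [|l /andP [IH0 IH1]]; first by rewrite big_geq // expr0 ler01 lexx.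
  have /andP [f0 f1] := f_bd l.+1 isT.
  by rewrite big_nat_recr //= exprSr mulr_ge0 //= ler_pM.
apply: (@squeeze_cvgr _ _ _ _ (fun=> 0) (fun l => gam ^+ l)).
- exact: nearW.
- exact: cvg_cst.
- by apply: cvg_expr; rewrite ger0_norm.
Qed.

(** * Gram determinants *)

Section GramDeterminant.
Variables (R : realFieldType) (d r : nat) (F : 'M[R]_(d, r)).
Hypothesis gram_unit : F^T *m F \in unitmx.

Definition lsq_resid (f : 'cV[R]_d) : 'cV[R]_d :=
  f - F *m (invmx (F^T *m F) *m (F^T *m f)).

Lemma trmx_mul_lsq_resid f : F^T *m lsq_resid f = 0.
Proof. by rewrite mulmxBr !mulmxA mulmxV // mul1mx subrr. Qed.

Lemma dot_lsq_resid_le f : dot (lsq_resid f) (lsq_resid f) <= dot f f.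
Proof.
pose c := invmx (F^T *m F) *m (F^T *m f).
have orth : dot (lsq_resid f) (F *m c) = 0.
  by rewrite /dot mulmxA -(trmxK F) -trmx_mul trmx_mul_lsq_resid trmx0 mul0mx mxE.
have -> : dot f f = dot (lsq_resid f + F *m c) (lsq_resid f + F *m c) by rewrite subrK.
move: (lsq_resid f) (F *m c) orth => g h orth.
by rewrite dotDl !dotDr orth (dotC h) orth addr0 add0r lerDl dot_ge0.
Qed.

Lemma det_gram_row_mx f :
  \det ((row_mx f F)^T *m row_mx f F) = dot (lsq_resid f) (lsq_resid f) * \det (F^T *m F).
Proof.
(* Subtracting from f its projection onto the columns of F is a column operation of
   determinant 1 that makes the Gram matrix block diagonal. *)
pose c := invmx (F^T *m F) *m (F^T *m f).
pose E : 'M[R]_(1 + r) := block_mx 1%:M 0 (- c) 1%:M.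
have fE : row_mx f F *m E = row_mx (lsq_resid f) F.
  by rewrite mul_row_block !mulmx1 !mulmx0 add0r mulmxN.
have detE : \det E = 1 by rewrite det_lblock !det1 mulr1.
have <- : \det ((row_mx f F *m E)^T *m (row_mx f F *m E))
        = \det ((row_mx f F)^T *m row_mx f F).
  rewrite trmx_mul -mulmxA (mulmxA (row_mx f F)^T) det_mulmx det_mulmx.
  by rewrite det_tr detE mul1r mulr1.
rewrite fE tr_row_mx mul_col_row trmx_mul_lsq_resid.
have -> : (lsq_resid f)^T *m F = 0.
  by rewrite -(trmxK F) -trmx_mul trmx_mul_lsq_resid trmx0.
by rewrite det_ublock det_mx11.
Qed.

Lemma lsq_resid_eq0_rank f : lsq_resid f = 0 -> (\rank (row_mx f F) <= r)%N.
Proof.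
move=> /eqP; rewrite subr_eq0 => /eqP ->.
rewrite -[X in row_mx _ X]mulmx1 -mul_mx_row.
exact: leq_trans (mxrankM_maxl _ _) (rank_leq_col F).
Qed.

End GramDeterminant.

Lemma mxrank_row_mx_le (F : fieldType) m n1 n2 (A : 'M[F]_(m, n1)) (B : 'M[F]_(m, n2)) :
  (\rank (row_mx A B) <= \rank A + \rank B)%N.
Proof.
by rewrite -mxrank_tr tr_row_mx -addsmxE -(mxrank_tr A) -(mxrank_tr B) mxrank_adds_leqif.
Qed.

Lemma gram_det_bounds (R : realFieldType) d r (F : 'M[R]_(d, r)) :
  \rank F = r -> (forall j, dot (col j F) (col j F) <= 1) ->
  0 < \det (F^T *m F) <= 1.
Proof.
elim: r F => [|r IH] F rkF colF; first by rewrite det_mx00 ltr01 lexx.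
set f := lsubmx (F : 'M[R]_(d, 1 + r)); set F1 := rsubmx (F : 'M[R]_(d, 1 + r)).
have colF1 j : dot (col j F1) (col j F1) <= 1.
  by have -> : col j F1 = col (rshift 1 j) F by apply/matrixP => i k; rewrite !mxE.
have ff : dot f f <= 1.
  have -> : f = col ord0 F.
    by apply/matrixP => i k; rewrite !mxE ord1; congr (F i _); exact: val_inj.
  exact: colF.
have FE : F = row_mx f F1 by rewrite hsubmxK.
rewrite FE in rkF *.
have rkF1 : \rank F1 = r.
  have := mxrank_row_mx_le f F1; have := rank_leq_col f; have := rank_leq_col F1.
  by rewrite rkF; lia.
have /andP [G1pos G1le] := IH F1 rkF1 colF1.
have G1unit : F1^T *m F1 \in unitmx by rewrite unitmxE unitfE gt_eqF.
have res_neq0 : lsq_resid F1 f != 0.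
  by apply/eqP => /lsq_resid_eq0_rank; rewrite rkF ltnn.
have res_le := dot_lsq_resid_le G1unit f.
rewrite det_gram_row_mx //; apply/andP; split; first by rewrite mulr_gt0 ?dot_gt0.
by rewrite -(mulr1 1) ler_pM ?dot_ge0 ?(ltW G1pos) ?(le_trans res_le).
Qed.

(** * The sampled system *)

Lemma first_hit_le (P : nat -> Prop) k : P k -> exists2 m, first_hit P = Some m & (m <= k)%N.
Proof.
move=> Pk; rewrite /first_hit; case: pselect => [h|]; last by case; exists k.
by case: ex_minnP => m _ min_m; exists m => //; apply/min_m/asboolP.
Qed.

Section SampledSystem.
Variables (R : realType) (n d N : nat) (A : 'M[R]_(n, d)) (W : 'I_N -> 'cV[R]_n).
Local Notation aw j := (A^T *m W j).

Definition AWmx : 'M[R]_(N, d) := \matrix_j (aw j)^T.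
Definition unitAWmx : 'M[R]_(N, d) := \matrix_j (unitv (aw j))^T.

Hypothesis aw_neq0 : forall j, aw j != 0.

Lemma AWmx_sub_unit : (AWmx <= unitAWmx)%MS.
Proof.
apply/row_subP => j; rewrite rowK -(unitvK (aw_neq0 j)) linearZ /=.
by apply: scalemx_sub; have := row_sub j unitAWmx; rewrite rowK.
Qed.

Definition kacz_rate : R := 1 - (frame_const unitAWmx * (N * N)%:R + 1)^-1.

Lemma kacz_rate_bounds : 0 <= kacz_rate < 1.
Proof.
have L_ge1 : 1 <= frame_const unitAWmx * (N * N)%:R + 1.
  by rewrite lerDr mulr_ge0 ?frame_const_ge0.
have L_gt0 := lt_le_trans ltr01 L_ge1.
by rewrite subr_ge0 invf_le1 // L_ge1 ltrBlDr ltrDl invr_gt0.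
Qed.

Definition unitv_mx r (f : 'I_r -> 'I_N) : 'M[R]_(d, r) :=
  \matrix_(i, k) unitv (aw (f k)) i 0.

Definition gram_min : R :=
  \big[Order.min/1]_(r < d.+1)
    \big[Order.min/1]_(f : {ffun 'I_r -> 'I_N} | 0 < \det ((unitv_mx f)^T *m unitv_mx f))
      \det ((unitv_mx f)^T *m unitv_mx f).

Lemma gram_min_gt0 : 0 < gram_min.
Proof.
apply: (big_ind (fun x => 0 < x)) => // [x y x0 y0|r _]; first by rewrite lt_min x0.
by apply: (big_ind (fun x => 0 < x)) => // x y x0 y0; rewrite lt_min x0.
Qed.

Lemma detset_bounds s s0 t x : detset A W s s0 t x -> gram_min <= x <= 1.
Proof.
move=> [r [F [[colF rkF _] ->]]].
have [f colE] : exists f : 'I_r -> 'I_N, forall k, col k F = unitv (aw (f k)).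
  apply: (@fin_all_exists _ (fun _ => 'I_N) (fun k j => col k F = unitv (aw j))) => k.
  by have [i [_ ->]] := colF k; exists (s i).
have FE : F = unitv_mx [ffun k => f k].
  by apply/matrixP => i k; rewrite [RHS]mxE ffunE -colE mxE.
have /andP [det_gt0 det_le1] : 0 < \det (F^T *m F) <= 1.
  by apply: gram_det_bounds => // k; rewrite colE dot_unitv.
rewrite det_le1 andbT.
have rd : (r < d.+1)%N by rewrite ltnS -{1}rkF rank_leq_row.
rewrite FE in det_gt0 *.
apply: le_trans (bigmin_le _ (Ordinal rd) _) _ => /=.
exact: bigmin_le_cond.
Qed.

Lemma detset_nonempty s s0 t : exists x, detset A W s s0 t x.
Proof.
pose X : 'M[R]_(t.+1 - s0, d) := \matrix_(i < t.+1 - s0) (unitv (aw (s (s0 + i)%N)))^T.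
pose F := (rowsub (maxrankfun X) X)^T.
exists (\det (F^T *m F)), (\rank X), F; split => //; split.
- move=> k; exists (s0 + maxrankfun X k)%N; split.
    by have := ltn_ord (maxrankfun X k); lia.
  by apply/matrixP => i j; rewrite ord1 !mxE.
- by rewrite mxrank_tr (eq_maxrowsub X).
- move=> y [i [si ->]]; rewrite -mxrank_tr tr_row_mx trmxK ltnS.
  have iX : (i - s0 < t.+1 - s0)%N by lia.
  apply: mxrankS; rewrite col_mx_sub (eq_maxrowsub X) submx_refl /=.
  have -> : (unitv (aw (s i)))^T = row (Ordinal iX) X.
    by rewrite rowK /=; congr (unitv (aw (s _)))^T; lia.
  exact: row_sub.
Qed.

Lemma inf_detset_bounds s s0 t : gram_min <= inf (detset A W s s0 t) <= 1.
Proof.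
have [x0 x0_in] := detset_nonempty s s0 t.
have lb : lbound (detset A W s s0 t) gram_min.
  by move=> x /detset_bounds /andP [].
apply/andP; split; first by apply: lb_le_inf => //; exists x0.
apply: le_trans (_ : x0 <= 1); last by case/andP: (detset_bounds x0_in).
by apply: ge_inf => //; exists gram_min.
Qed.

Section Probability.
Variable p : 'I_N -> R.
Hypotheses (p_gt0 : forall j, 0 < p j) (p_sum1 : \sum_j p j = 1).

Lemma prob_zero_eq1 z : prob_zero A W p z = 1 <-> forall j, dot (aw j) z = 0.
Proof.
have zE j : (z^T *m A^T *m W j == 0) = (dot (aw j) z == 0).
  by rewrite -mulmxA mx11_eq0 dotC.
split => [pz j|orth]; last first.
  by rewrite /prob_zero -p_sum1; apply: eq_bigl => j; rewrite zE orth eqxx.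
have compl0 : \sum_(i | z^T *m A^T *m W i != 0) p i = 0.
  have := p_sum1; rewrite (bigID (fun i => z^T *m A^T *m W i == 0)) /=.
  by rewrite -/(prob_zero A W p z) pz; lra.
apply/eqP; rewrite -zE; apply: contraTT (p_gt0 j) => zj.
by rewrite (psumr_eq0P _ compl0) ?ltxx // => i _; exact: ltW.
Qed.

Lemma NwP z : Nw A W p z <-> forall j, dot (aw j) z = 0.
Proof.
split => [z_N|orth M]; last by apply; exact/prob_zero_eq1.
have kerE y : (y^T <= kermx AWmx^T)%MS = (AWmx *m y == 0).
  by rewrite -trmx_eq0 trmx_mul; apply/sub_kermxP/eqP.
apply/matrix_rows_mul_eq0/eqP; rewrite -kerE; apply: z_N => y /prob_zero_eq1 y_orth.
by rewrite kerE; apply/eqP/matrix_rows_mul_eq0.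
Qed.

Lemma RwP y : Rw A W p y <-> (y^T <= AWmx)%MS.
Proof.
split => [y_R|/submxP [D yE] z /NwP z_N]; last first.
  by rewrite yE -mulmxA (matrix_rows_mul_eq0 _ _).2 // mulmx0.
rewrite submxE; apply/eqP/matrixP => i k; rewrite [RHS]mxE.
have coker_N : Nw A W p (col k (cokermx AWmx)).
  by apply/NwP/matrix_rows_mul_eq0; rewrite -col_mulmx mulmx_coker col0.
have -> : (y^T *m cokermx AWmx) i k = col k (y^T *m cokermx AWmx) i 0.
  by rewrite [RHS]mxE.
by rewrite col_mulmx y_R // mxE.
Qed.

Lemma Rw_hproj y j : Rw A W p y -> Rw A W p (hproj (unitv (aw j)) y).
Proof.
move=> /RwP y_R; apply/RwP; rewrite /hproj /unitv linearB !linearZ /= -scaleN1r.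
apply: addmx_sub => //; do 3 apply: scalemx_sub.
by have := row_sub j AWmx; rewrite rowK.
Qed.

Lemma spanOK_cover (s : nat -> 'I_N) s0 k :
  (forall j, exists2 i, (s0 <= i <= k)%N & s i = j) -> spanOK A W p s s0 k.
Proof.
move=> cover y; rewrite RwP.
set S := (\sum_(s0 <= i < k.+1) <<(aw (s i))^T>>)%MS.
have S_sub : (S <= AWmx)%MS.
  apply: (big_ind (fun X : 'M[R]_d => (X <= AWmx)%MS)) => [|X Y|i _].
  - exact: sub0mx.
  - by rewrite addsmx_sub => -> ->.
  - by rewrite genmxE; have := row_sub (s i) AWmx; rewrite rowK.
have sub_S : (AWmx <= S)%MS.
  apply/row_subP => j; rewrite rowK; have [i si <-] := cover j.
  rewrite /S (bigD1_seq i) /=; last 2 first.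
  - by rewrite mem_index_iota; lia.
  - exact: iota_uniq.
  by apply: submx_trans (addsmxSl _ _); rewrite genmxE.
by split => y_sub; apply: submx_trans y_sub _.
Qed.

Section Sampling.
Variable s : nat -> 'I_N.
Hypothesis s_epoch : forall e, injective (fun i : 'I_N => s (e * N + i)%N).

Lemma epoch_surj e j : exists i : 'I_N, s (e * N + i)%N = j.
Proof. by exists (invF (@s_epoch e) j); rewrite (f_invF (@s_epoch e) j). Qed.

Lemma tau_gap l : exists t t',
  [/\ tau A W p s l = Some t, tau A W p s l.+1 = Some t' & (t' - t <= 2 * N)%N].
Proof.
have N_gt0 : (0 < N)%N by case: (s 0%N) => i; lia.
elim: l => [|l [_ [t [_ tau_t _]]]].
  have [m tau1 m_le] : exists2 m, first_hit (spanOK A W p s 0) = Some m & (m <= N.-1)%N.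
    apply/first_hit_le/spanOK_cover => j; have [i <-] := epoch_surj 0 j.
    by exists i; [have := ltn_ord i; lia | rewrite mul0n add0n].
  by exists 0%N, m; split => //; lia.
(* The window from t.+1 to the end of the next complete epoch e contains all of epoch e. *)
pose e := (t %/ N).+1.
have t_split : (t = t %/ N * N + t %% N)%N := divn_eq t N.
have t_mod : (t %% N < N)%N := ltn_pmod t N_gt0.
have [m tau2 m_le] : exists2 m,
    first_hit (fun k => (t < k)%N /\ spanOK A W p s t.+1 k) = Some m & (m <= e * N + N.-1)%N.
  apply: first_hit_le; split; first by rewrite /e mulSn; lia.
  apply: spanOK_cover => j; have [i <-] := epoch_surj e j.
  by exists (e * N + i)%N => //; have := ltn_ord i; rewrite /e mulSn; lia.
exists t, m; split => //; last by rewrite /e mulSn in m_le; lia.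
change (obind (fun t0 => first_hit (fun k => (t0 < k)%N /\ spanOK A W p s t0.+1 k))
  (tau A W p s l.+1) = Some m).
by rewrite tau_t /= tau2.
Qed.

Lemma gamma_bounds j : (1 <= j)%N -> 0 <= gamma A W p s j <= 1 - gram_min.
Proof.
move=> j_ge1; have [t [t' [tau_t tau_t' _]]] := tau_gap j.-1.
rewrite prednK // in tau_t'; rewrite /gamma tau_t tau_t'.
have /andP [inf_ge inf_le] := inf_detset_bounds s (if j == 1%N then 0%N else t.+1) t'.
by rewrite subr_ge0 inf_le lerB.
Qed.

Section KaczmarzError.
Variables (b : 'cV[R]_n) (xs x0 u1 : 'cV[R]_d).
Hypotheses (xs_sol : A *m xs = b) (u1_N : Nw A W p u1) (err0_R : Rw A W p (x0 - xs - u1)).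
Local Notation err k := (kacz A b W s x0 k - xs - u1).

Lemma kacz_errS k : err k.+1 = hproj (unitv (aw (s k))) (err k).
Proof.
rewrite /hproj dot_unitvZ /=; set x := kacz A b W s x0 k.
have a_u1 : dot (aw (s k)) u1 = 0 by move/NwP: u1_N; apply.
have -> : ((W (s k))^T *m (b - A *m x)) 0 0 = - dot (aw (s k)) (x - xs - u1).
  rewrite -xs_sol -mulmxBr mulmxA -[(W (s k))^T *m A]trmxK trmx_mul trmxK.
  by rewrite -/(dot _ _) !dotBr a_u1; ring.
by apply/matrixP => i j; rewrite !mxE; ring.
Qed.

Lemma err_Rw k : Rw A W p (err k).
Proof. by elim: k => [|k IH] //; rewrite kacz_errS; exact: Rw_hproj. Qed.

Lemma err_epoch e :
  dot (err (e * N + N)) (err (e * N + N)) <= kacz_rate * dot (err (e * N)) (err (e * N)).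
Proof.
set k0 := (e * N)%N.
pose g i := err (k0 + i); pose u i := unitv (aw (s (k0 + i))).
have u_unit i : dot (u i) (u i) = 1 by exact: dot_unitv.
have g_step i : g i.+1 = hproj (u i) (g i) by rewrite /g addnS kacz_errS.
have decr : 0 <= dot (g 0%N) (g 0%N) - dot (g N) (g N).
  by rewrite subr_ge0 (sweep_energy_nonincr u_unit g_step).
have sweep := sweep_bound u_unit g_step N.
have sumE : \sum_(i < N) dot (u i) (g 0%N) ^+ 2
    = dot (unitAWmx *m err k0) (unitAWmx *m err k0).
  by rewrite dot_matrix_rows_mul [RHS](reindex_inj (@s_epoch e)) /g addn0.
rewrite sumE in sweep; rewrite /g addn0 in sweep decr.
have frame : dot (err k0) (err k0)
    <= frame_const unitAWmx * dot (unitAWmx *m err k0) (unitAWmx *m err k0).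
  by apply: frame_ineq; apply: submx_trans AWmx_sub_unit; apply/RwP/err_Rw.
apply: le_contraction; first by rewrite ltr_pwDr ?mulr_ge0 ?frame_const_ge0.
apply: le_trans frame _; rewrite mulrDl mul1r -mulrA.
by rewrite ler_wpDr // ler_wpM2l ?frame_const_ge0.
Qed.

Lemma err_epochs e :
  dot (err (e * N)) (err (e * N)) <= kacz_rate ^+ e * dot (err 0%N) (err 0%N).
Proof.
elim: e => [|e IH]; first by rewrite mul0n expr0 mul1r.
rewrite mulSnr exprS -mulrA; apply: le_trans (err_epoch e) _.
by apply: ler_wpM2l IH; case/andP: kacz_rate_bounds.
Qed.

End KaczmarzError.
End Sampling.
End Probability.
End SampledSystem.

Unset Implicit Arguments.

Theorem mainTheorem14 (R : realType) (n d N : nat) (A : 'M[R]_(n, d))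
  (W : 'I_N -> 'cV[R]_n) (hWinj : injective W)
  (hAW : forall j, A^T *m W j != 0) :
  exists gam : R, 0 <= gam < 1 /\
  forall (p : 'I_N -> R), (forall j, 0 < p j) -> \sum_(j < N) p j = 1 ->
  forall (b : 'cV[R]_n) (xs : 'cV[R]_d), A *m xs = b ->
  forall (s : nat -> 'I_N),
    (forall e : nat, injective (fun i : 'I_N => s (e * N + i)%N)) ->
  [/\ (forall l : nat, exists t t' : nat,
         [/\ tau A W p s l = Some t, tau A W p s l.+1 = Some t' & (t' - t <= 2 * N)%N]),
      (fun l : nat => \prod_(1 <= j < l.+1) gamma A W p s j) @ \oo --> (0 : R),
      (forall j : nat, (1 <= j)%N -> gamma A W p s j <= gam) &
      forall (x0 u1 u2 : 'cV[R]_d) (l : nat),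
        is_orth_proj (Nw A W p) (x0 - xs) u1 ->
        is_orth_proj (Rw A W p) (x0 - xs) u2 ->
        sqnorm (kacz A b W s x0 (2 * N * l) - xs - u1) <= gam ^+ l * sqnorm u2].
Proof.
pose gam := Num.max (1 - gram_min A W) (kacz_rate A W).
have /andP [rate_ge0 rate_lt1] := kacz_rate_bounds A W.
have gam_bounds : 0 <= gam < 1.
  by rewrite le_max rate_ge0 orbT gt_max rate_lt1 ltrBlDr ltrDl gram_min_gt0.
exists gam; split => // p p_gt0 p_sum1 b xs xs_sol s s_epoch.
have gamma_le j : (1 <= j)%N -> 0 <= gamma A W p s j <= gam.
  by move=> /(gamma_bounds hAW p_gt0 p_sum1 s_epoch) /andP [-> g_le]; rewrite le_max g_le.
split.
- exact: (tau_gap A W p_gt0 p_sum1 s_epoch).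
- exact: cvg_prod_le_lt1 gam_bounds gamma_le.
- by move=> j /gamma_le /andP [].
move=> x0 u1 u2 l proj_u1 proj_u2.
have := err_epochs hAW p_gt0 p_sum1 s_epoch xs_sol proj_u1.1 proj_u1.2 (2 * l).
rewrite -(orth_proj_compl proj_u1 proj_u2) -!sqnormE mulnAC => err_le.
apply: le_trans err_le _; apply: ler_wpM2r; first by rewrite sqnormE dot_ge0.
apply: le_trans (ler_wiXn2l rate_ge0 (ltW rate_lt1) (_ : l <= 2 * l)%N) _; first lia.
have gam_ge0 : 0 <= gam by case/andP: gam_bounds.
by apply: lerXn2r; rewrite ?nnegrE // le_max lexx orbT.
Qed.
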